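(* Let $P_m(z)=\sum_{j=0}^m \frac{(2m-j)!}{j!(m-j)!}z^j$ and $R_m(z)=P_m(z)/P_m(-z)$. If $m$ is even, let $\hat z_m(t,0)$ be the solution of $R_m(z)=e^t$ satisfying $\hat z_m(t,0)=D_m/t+\mathcal{O}(1)$ as $|t|\to0$ for some constant $D_m>0$; if $m$ is odd, let $\hat z_m(t,\pi)$ be the solution of $R_m(z)=-e^t$ satisfying $\hat z_m(t,\pi)=E_m/t+\mathcal{O}(1)$ as $|t|\to0$ for some constant $E_m>0$. Then, as $|t|\to0$, $$R_m'(\hat z_m(t,0))=\mathcal{O}(t^2)\ \text{ for even } m,\qquad R_m'(\hat z_m(t,\pi))=\mathcal{O}(t^2)\ \text{ for odd } m.$$
   Context: $R_m$ is the stability function of the $m$-stage Gauss Runge–Kutta method (the $(m,m)$-Padé approximant of $e^z$). For even $m$ exactly one solution of $R_m(z)=e^t$, and for odd $m$ exactly one solution of $R_m(z)=-e^t$, tends to infinity as $t\to0$, with the stated asymptotics. *)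

From HB Require Import structures.
From mathcomp Require Import all_boot all_order all_algebra.
From mathcomp Require Import complex.
From mathcomp Require Import all_classical all_reals all_analysis.
Set Implicit Arguments. Unset Strict Implicit. Unset Printing Implicit Defensive.
Import Order.TTheory GRing.Theory Num.Theory.
Local Open Scope ring_scope.
Local Open Scope complex_scope.

Section Gauss.
Variable R : realType.
Local Notation C := R[i].

Definition cabs (z : C) : R := Normc.normc z.

Definition cexp (z : C) : C :=
  (expR (complex.Re z) * cos (complex.Im z)) +i* (expR (complex.Re z) * sin (complex.Im z)).

Definition Pm (m : nat) : {poly C} :=
  \poly_(j < m.+1) (((2 * m - j)`!)%:R / ((j`! * (m - j)`!)%:R) : C).

Definition Rm (m : nat) (z : C) : C := (Pm m).[z] / (Pm m).[- z].

(* R_m'(z): derivative of the rational function R_m, by the quotient rule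
   (d/dz P_m(-z) = - P_m'(-z)). *)
Definition Rm' (m : nat) (z : C) : C :=
  ((Pm m)^`().[z] * (Pm m).[- z] + (Pm m).[z] * (Pm m)^`().[- z])
  / ((Pm m).[- z] ^+ 2).

End Gauss.

(* The numerator P_m'(z) P_m(-z) + P_m(z) P_m'(-z) of R_m' is the Wronskian of
   P_m(z) and P_m(-z), two polynomials of degree m with leading coefficients
   1 and (-1)^m; their z^(2m-1) terms cancel, so it has degree at most 2m-2.
   Since |P_m(-z)| >= |z|^m / 2 for large z, R_m'(z) = O(z^-2) at infinity.
   As zhat(t) = D/t + O(1) gives |zhat(t)| >= D / (2|t|) for small t, we get
   R_m'(zhat(t)) = O(t^2). *)

From HB Require Import structures.
From mathcomp Require Import all_boot all_order all_algebra.
From mathcomp Require Import complex.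
From mathcomp Require Import all_classical all_reals all_analysis.
From mathcomp Require Import ring lra zify.
Set Implicit Arguments. Unset Strict Implicit. Unset Printing Implicit Defensive.
Import Order.TTheory GRing.Theory Num.Theory.
Local Open Scope ring_scope.
Local Open Scope complex_scope.

Section Wronskian.
Variable F : comNzRingType.
Implicit Types (a b : F) (p q r s : {poly F}).

Definition wronskian p q : {poly F} := p^`() * q - p * q^`().

Lemma wronskianDl p q r : wronskian (p + q) r = wronskian p r + wronskian q r.
Proof. by rewrite /wronskian !derivD; ring. Qed.

Lemma wronskianDr p q r : wronskian p (q + r) = wronskian p q + wronskian p r.
Proof. by rewrite /wronskian !derivD; ring. Qed.

Lemma wronskian_CXn a b m :
  wronskian (a%:P * 'X^m) (b%:P * 'X^m) = 0.
Proof. by rewrite /wronskian !deriv_mulC derivXn; ring. Qed.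

Lemma size_derivM_leq p q : (size (p^`() * q)%R <= (size p + size q).-2)%N.
Proof.
have [->|dp0] := eqVneq p^`() 0; first by rewrite mul0r size_poly0.
have p0 : p != 0 by apply: contraNneq dp0 => ->; rewrite deriv0.
have := lt_size_deriv p0; have := size_polyMleq (p^`()) q.
by rewrite -size_poly_gt0 in dp0; lia.
Qed.

Lemma size_wronskian_leq p q : (size (wronskian p q) <= (size p + size q).-2)%N.
Proof.
apply: leq_trans (size_polyD _ _) _; rewrite size_polyN geq_max [p * _]mulrC.
by rewrite size_derivM_leq addnC size_derivM_leq.
Qed.

Lemma size_wronskian_CXnD a b r s m : (size r <= m)%N -> (size s <= m)%N ->
  (size (wronskian (a%:P * 'X^m + r) (b%:P * 'X^m + s))%R <= (m.*2).-1)%N.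
Proof.
move=> hr hs; have hX (c : F) : (size (c%:P * 'X^m)%R <= m.+1)%N.
  apply: leq_trans (size_polyMleq _ _) _.
  by rewrite size_polyXn size_polyC; case: (c != 0).
rewrite wronskianDl !wronskianDr wronskian_CXn add0r.
have w1 := size_wronskian_leq (a%:P * 'X^m) s.
have w2 := size_wronskian_leq r (b%:P * 'X^m).
have w3 := size_wronskian_leq r s.
have ha := hX a; have hb := hX b.
apply: leq_trans (size_polyD _ _) _; rewrite geq_max; apply/andP; split; first lia.
by apply: leq_trans (size_polyD _ _) _; rewrite geq_max; apply/andP; split; lia.
Qed.

Lemma comp_opp_XnD r m :
  ('X^m + r) \Po (- 'X) = ((-1) ^+ m)%:P * 'X^m + (r \Po (- 'X)).
Proof. by rewrite polyC_exp polyCN polyC1 -exprMn mulN1r comp_polyD comp_Xn_poly. Qed.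

End Wronskian.

Section ComplexPolyBounds.
Variable R : realType.
Local Notation C := R[i].
Implicit Types (x y z : C) (p r : {poly C}).

Lemma cabsE z : `|z| = (cabs z)%:C.
Proof. by case: z => a b; rewrite normc_def. Qed.

Lemma cabs0 : cabs (0 : C) = 0.
Proof. exact: Normc.normc0. Qed.

Lemma cabs_ge0 z : 0 <= cabs z.
Proof. by case: z => a b; apply: sqrtr_ge0. Qed.

Lemma cabsM x y : cabs (x * y) = cabs x * cabs y.
Proof. exact: Normc.normcM. Qed.

Lemma cabsV z : cabs z^-1 = (cabs z)^-1.
Proof. exact: Normc.normcV. Qed.

Lemma cabsX z n : cabs (z ^+ n) = cabs z ^+ n.
Proof. by apply: complexI; rewrite rmorphXn -!cabsE normrX. Qed.

Lemma cabsN z : cabs (- z) = cabs z.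
Proof. by apply: complexI; rewrite -!cabsE normrN. Qed.

Lemma cabsD x y : cabs (x + y) <= cabs x + cabs y.
Proof. by rewrite -lecR rmorphD -!cabsE ler_normD. Qed.

Lemma cabs_real (a : R) : cabs a%:C = `|a|.
Proof. by rewrite /cabs /Normc.normc /= expr0n addr0 sqrtr_sqr. Qed.

Lemma cabs_sum (I : finType) (F : I -> C) :
  cabs (\sum_i F i) <= \sum_i cabs (F i).
Proof. by rewrite -lecR rmorph_sum -cabsE (le_trans (ler_norm_sum _ _ _)). Qed.

Definition coef_l1norm (p : {poly C}) : R := \sum_(i < size p) cabs p`_i.

Lemma coef_l1norm_ge0 p : 0 <= coef_l1norm p.
Proof. by apply: sumr_ge0 => i _; apply: cabs_ge0. Qed.

Lemma cabs_horner_leq p j n z : (size p + j <= n.+1)%N -> 1 <= cabs z ->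
  cabs p.[z] * cabs z ^+ j <= coef_l1norm p * cabs z ^+ n.
Proof.
move=> hsize z1; rewrite horner_coef /coef_l1norm mulr_suml.
have zj0 : 0 <= cabs z ^+ j by rewrite exprn_ge0 ?cabs_ge0.
apply: le_trans
  (ler_wpM2r zj0 (@cabs_sum _ (fun i : 'I_(size p) => p`_i * z ^+ i))) _.
rewrite mulr_suml; apply: ler_sum => i _.
rewrite cabsM cabsX -mulrA -exprD ler_wpM2l ?cabs_ge0 // ler_weXn2l //.
by have := ltn_ord i; lia.
Qed.

Lemma cabs_horner_XnD_geq r m z : (size r <= m)%N ->
  1 + 2 * coef_l1norm r <= cabs z -> cabs z ^+ m <= 2 * cabs ('X^m + r).[z].
Proof.
move=> hr hz; have z1 : 1 <= cabs z by have := coef_l1norm_ge0 r; lra.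
have hzm : 0 < cabs z ^+ m by apply: exprn_gt0; lra.
have hrz : 2 * cabs r.[z] <= cabs z ^+ m.
  have hr1 : (size r + 1 <= m.+1)%N by rewrite addn1.
  have := cabs_horner_leq hr1 z1; rewrite expr1 => hle.
  have hnorm : 2 * coef_l1norm r * cabs z ^+ m <= cabs z * cabs z ^+ m.
    by rewrite ler_wpM2r ?ltW //; lra.
  by rewrite -(@ler_pM2r _ (cabs z)); lra.
have := cabsD ('X^m + r).[z] (- r.[z]).
rewrite hornerD hornerXn addrK cabsN cabsX; lra.
Qed.

End ComplexPolyBounds.

Section GaussStability.
Variable R : realType.
Local Notation C := R[i].
Local Notation P m := (Pm R m).

Lemma size_Pm_subXn m : (size (P m - 'X^m)%R <= m)%N.
Proof.
apply/leq_sizeP => j hj; rewrite coefB coefXn coef_poly.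
rewrite ltnS; have [->|hmj] := eqVneq j m.
  rewrite leqnn subnn mul2n -addnn addnK fact0 muln1 divff ?subrr //.
by rewrite leqNgt ltn_neqAle eq_sym hmj hj subrr.
Qed.

Lemma Rm'E m z :
  Rm' m z = (wronskian (P m) (P m \Po - 'X)).[z] / (P m).[- z] ^+ 2.
Proof.
rewrite /Rm' /wronskian deriv_comp derivN derivX hornerD hornerN !hornerM.
by rewrite !horner_comp hornerN hornerX hornerN hornerC mulrN1 mulrN opprK.
Qed.

Lemma size_wronskian_Pm m :
  (size (wronskian (P m) (P m \Po - 'X)) <= m.*2.-1)%N.
Proof.
rewrite -(subrKC 'X^m (P m)) comp_opp_XnD -[X in X + _]mul1r -polyC1.
apply: size_wronskian_CXnD; first exact: size_Pm_subXn.
by rewrite size_comp_poly2 ?size_polyN ?size_polyX // size_Pm_subXn.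
Qed.

Lemma Rm'_bigO_inv_sqr m : exists K M : R, 0 < M /\
  forall z : C, M <= cabs z -> cabs (Rm' m z) * cabs z ^+ 2 <= K.
Proof.
set r := P m - 'X^m; set W := wronskian (P m) (P m \Po - 'X).
exists (4 * coef_l1norm W), (1 + 2 * coef_l1norm r).
split=> [|z hz]; first by have := coef_l1norm_ge0 r; lra.
have z1 : 1 <= cabs z by have := coef_l1norm_ge0 r; lra.
have hPz : cabs z ^+ m <= 2 * cabs (P m).[- z].
  rewrite -(cabsN z) -(subrKC 'X^m (P m)) -/r in hz *.
  exact: cabs_horner_XnD_geq (size_Pm_subXn m) hz.
have hWz : cabs W.[z] * cabs z ^+ 2 <= coef_l1norm W * (cabs z ^+ m) ^+ 2.
  have [->|W0] := eqVneq W 0.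
    rewrite horner0 cabs0 mul0r.
    by rewrite mulr_ge0 ?coef_l1norm_ge0 ?exprn_ge0 ?cabs_ge0.
  rewrite -exprM muln2; apply: cabs_horner_leq z1.
  have hW : (size W <= m.*2.-1)%N := size_wronskian_Pm m.
  (* the two occurrences of [size W] differ in their ring instances, which
     [lia] would treat as distinct atoms *)
  rewrite -size_poly_gt0 in W0; move: (size W) W0 hW => n; lia.
have zm0 : 0 < cabs z ^+ m by apply: exprn_gt0; lra.
have Pz0 : 0 < cabs (P m).[- z] by lra.
rewrite Rm'E -/W cabsM cabsV cabsX mulrAC ler_pdivrMr ?exprn_gt0 //.
have : (cabs z ^+ m) ^+ 2 <= (2 * cabs (P m).[- z]) ^+ 2.
  by apply: lerXn2r; rewrite ?nnegrE; lra.
have := coef_l1norm_ge0 W; rewrite exprMn; nra.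
Qed.

End GaussStability.

Section PoleAsymptotics.
Variable R : realType.
Local Notation C := R[i].

Lemma cabs_near_pole (D K M : R) (t z : C) :
  0 < cabs t -> 0 <= M -> cabs (z - D%:C / t) <= K ->
  2 * cabs t * (K + M) <= D -> M <= cabs z /\ D <= 2 * cabs t * cabs z.
Proof.
move=> t0 M0 hz hD; have K0 : 0 <= K := le_trans (cabs_ge0 _) hz.
have tK0 : 0 <= cabs t * K := mulr_ge0 (ltW t0) K0.
have tM0 : 0 <= cabs t * M := mulr_ge0 (ltW t0) M0.
have D0 : 0 <= D by lra.
have hDt : D <= cabs t * cabs z + cabs t * K.
  have := cabsD z (D%:C / t - z); rewrite subrKC -opprB cabsN.
  rewrite cabsM cabsV cabs_real ger0_norm // => h.
  by rewrite -mulrDr -ler_pdivrMl // mulrC (le_trans h) // lerD2l.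
split; last by lra.
by rewrite -(ler_pM2l t0); lra.
Qed.

Lemma bigO_sqr_comp_pole (f zhat : C -> C) (D : R) : 0 < D ->
  (exists K M : R, 0 < M /\
     forall z, M <= cabs z -> cabs (f z) * cabs z ^+ 2 <= K) ->
  (exists K d : R, 0 < d /\
     forall t, 0 < cabs t < d -> cabs (zhat t - D%:C / t) <= K) ->
  exists K d : R, 0 < d /\
     forall t, 0 < cabs t < d -> cabs (f (zhat t)) <= K * cabs t ^+ 2.
Proof.
move=> D0 [Kf [M [M0 hf]]] [Kz [d [d0 hzhat]]].
have KzM0 : 0 < `|Kz| + M by have := normr_ge0 Kz; lra.
exists (4 * Kf / D ^+ 2), (Num.min d (D / (2 * (`|Kz| + M)))).
split=> [|t /andP[t0]]; first by rewrite lt_min d0 divr_gt0 ?mulr_gt0.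
rewrite lt_min => /andP[td tD].
have hz : cabs (zhat t - D%:C / t) <= `|Kz|.
  by apply: le_trans (ler_norm Kz); apply: hzhat; rewrite t0 td.
have hD : 2 * cabs t * (`|Kz| + M) <= D.
  by rewrite ltr_pdivlMr ?mulr_gt0 // in tD; lra.
have [zM Dtz] := cabs_near_pole t0 (ltW M0) hz hD.
have fz0 := cabs_ge0 (f (zhat t)); have hfz := hf _ zM.
have hD2 : D ^+ 2 <= (2 * cabs t * cabs (zhat t)) ^+ 2.
  by apply: lerXn2r; rewrite ?nnegrE; lra.
rewrite mulrAC ler_pdivlMr ?exprn_gt0 //.
have t20 : 0 <= cabs t ^+ 2 by rewrite exprn_ge0 ?cabs_ge0.
nra.
Qed.

End PoleAsymptotics.

Theorem lemma5 (R : realType) (m : nat) :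
  (* even m: the solution of R_m(z) = e^t with zhat(t) = D/t + O(1) *)
  (~~ odd m ->
   forall (D : R) (zhat : R[i] -> R[i]),
     0 < D ->
     (exists2 d : R, 0 < d &
        forall t : R[i], 0 < cabs t < d -> Rm m (zhat t) = cexp t) ->
     (exists K d : R, 0 < d /\
        forall t : R[i], 0 < cabs t < d -> cabs (zhat t - D%:C / t) <= K) ->
     exists K d : R, 0 < d /\
        forall t : R[i], 0 < cabs t < d ->
          cabs (Rm' m (zhat t)) <= K * cabs t ^+ 2) /\
  (* odd m: the solution of R_m(z) = - e^t with zhat(t) = E/t + O(1) *)
  (odd m ->
   forall (E : R) (zhat : R[i] -> R[i]),
     0 < E ->
     (exists2 d : R, 0 < d &
        forall t : R[i], 0 < cabs t < d -> Rm m (zhat t) = - cexp t) ->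
     (exists K d : R, 0 < d /\
        forall t : R[i], 0 < cabs t < d -> cabs (zhat t - E%:C / t) <= K) ->
     exists K d : R, 0 < d /\
        forall t : R[i], 0 < cabs t < d ->
          cabs (Rm' m (zhat t)) <= K * cabs t ^+ 2).
Proof.
split=> _ D zhat D0 _ zhat_pole;
  exact: bigO_sqr_comp_pole D0 (Rm'_bigO_inv_sqr R m) zhat_pole.
Qed.
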